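(* Under the Local Regularity Assumption (see context), let $L:=\sup\{\|\zeta\|:\zeta\in\partial f(x),\,x\in\mathcal{X}\cap B_\epsilon(\bar x)\}$, assumed finite and positive, and $\tau:=\mu/L$. Let $x_0\in B_{\epsilon/4}(\bar x)\cap\mathcal{X}$ satisfy $$\mathrm{dist}(x_0,\mathcal{X}^* )\le\min\Big\{\frac{3\epsilon\mu^2}{64L^2},\frac{\mu}{2\rho}\Big\}.$$ Then the iterates $x_k$ of the Polyak subgradient method started at $x_0$ all lie in $B_\epsilon(\bar x)$ and satisfy $$\mathrm{dist}^2(x_{k+1},\mathcal{X}^* )\le\Big(1-\frac{\tau^2}{2}\Big)\mathrm{dist}^2(x_k,\mathcal{X}^* )\quad\text{for all }k\ge0.$$ Moreover, the iterates converge to some $x_\infty\in\mathcal{X}^*$ with $$\|x_k-x_\infty\|\le\frac{16L^3\,\mathrm{dist}(x_0,\mathcal{X}^* )}{3\mu^3}\Big(1-\frac{\tau^2}{2}\Big)^{k/2}\quad\text{for all }k\ge0.$$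
   Context: $\mathbf{E}$ is a Euclidean space with norm $\|\cdot\|$; $B_\epsilon(z)$ is the closed ball of radius $\epsilon$ about $z$; $\mathrm{proj}_{\mathcal{X}}$ is the Euclidean projection. For $f\colon\mathbf{E}\to\mathbb{R}$, $\partial f(x)$ is the (Fréchet) subdifferential: the set of $\xi$ with $f(y)\ge f(x)+\langle\xi,y-x\rangle+o(\|y-x\|)$ as $y\to x$. Local Regularity Assumption: $\mathcal{X}\subset\mathbf{E}$ is nonempty closed convex, $f\colon\mathbf{E}\to\mathbb{R}$ is continuous, $\mathcal{X}^*:=\operatorname{argmin}_{x\in\mathcal{X}}f$ is nonempty, $\bar x\in\mathcal{X}^*$, and $\epsilon,\mu,\rho>0$ satisfy: (local weak convexity) $f(y)\ge f(x)+\langle\zeta,y-x\rangle-\frac\rho2\|y-x\|^2$ for all $x,y\in\mathcal{X}\cap B_\epsilon(\bar x)$ and $\zeta\in\partial f(x)$; (local sharpness) $f(x)-\inf_{\mathcal{X}}f\ge\mu\,\mathrm{dist}(x,\mathcal{X}^* )$ for all $x\in\mathcal{X}\cap B_\epsilon(\bar x)$. Polyak subgradient method: given $x_k$, choose $\zeta_k\in\partial f(x_k)$; if $\zeta_k=0$ set $x_{k+1}=x_k$, otherwise $x_{k+1}=\mathrm{proj}_{\mathcal{X}}\big(x_k-\frac{f(x_k)-\min_{\mathcal{X}}f}{\|\zeta_k\|^2}\zeta_k\big)$. *)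

(* classical real numbers. E is modelled as R^n = (Fin.t n -> R)
   with the standard Einner product. *)
From Stdlib Require Import Fin Reals Lra Classical ClassicalEpsilon FunctionalExtensionality.
Open Scope R_scope.

Definition vec (n : nat) : Type := Fin.t n -> R.

Definition vadd {n} (x y : vec n) : vec n := fun i => x i + y i.
Definition vsub {n} (x y : vec n) : vec n := fun i => x i - y i.
Definition vscal {n} (a : R) (x : vec n) : vec n := fun i => a * x i.
Definition vzero {n} : vec n := fun _ => 0.

Fixpoint Einner (n : nat) : vec n -> vec n -> R :=
  match n return vec n -> vec n -> R with
  | O => fun _ _ => 0
  | S m => fun x y => x Fin.F1 * y Fin.F1
                      + Einner m (fun i => x (Fin.FS i)) (fun i => y (Fin.FS i))
  end.
Arguments Einner {n} x y.

Definition Enorm {n} (x : vec n) : R := sqrt (Einner x x).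

Definition Eball {n} (z : vec n) (eps : R) (x : vec n) : Prop :=
  Enorm (vsub x z) <= eps.

(* greatest lower bound / infimum (classical choice; 0 if none exists) *)
Definition Eis_glb (A : R -> Prop) (m : R) : Prop :=
  (forall a, A a -> m <= a) /\ (forall b, (forall a, A a -> b <= a) -> b <= m).

Definition EInf (A : R -> Prop) : R :=
  match excluded_middle_informative (exists m, Eis_glb A m) with
  | left h => proj1_sig (constructive_indefinite_description _ h)
  | right _ => 0
  end.

Definition Edist {n} (x : vec n) (S : vec n -> Prop) : R :=
  EInf (fun d => exists y, S y /\ d = Enorm (vsub x y)).

Definition Eclosed_set {n} (X : vec n -> Prop) : Prop :=
  forall x, (forall e, 0 < e -> exists y, X y /\ Enorm (vsub x y) < e) -> X x.

Definition Econvex_set {n} (X : vec n -> Prop) : Prop :=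
  forall x y t, X x -> X y -> 0 <= t <= 1 ->
    X (vadd (vscal t x) (vscal (1 - t) y)).

Definition Econtinuous_fun {n} (f : vec n -> R) : Prop :=
  forall x e, 0 < e -> exists d, 0 < d /\
    forall y, Enorm (vsub y x) < d -> Rabs (f y - f x) < e.

Definition frechet_subgrad {n} (f : vec n -> R) (x xi : vec n) : Prop :=
  forall e, 0 < e -> exists d, 0 < d /\
    forall y, Enorm (vsub y x) <= d ->
      f y >= f x + Einner xi (vsub y x) - e * Enorm (vsub y x).

Definition inf_on {n} (X : vec n -> Prop) (f : vec n -> R) : R :=
  EInf (fun v => exists x, X x /\ v = f x).

Definition argmin_on {n} (X : vec n -> Prop) (f : vec n -> R) (x : vec n) : Prop :=
  X x /\ forall z, X z -> f x <= f z.

(* Euclidean projection onto X (unique for nonempty closed convex X) *)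
Definition Eproj {n} (X : vec n -> Prop) (y : vec n) : vec n :=
  match excluded_middle_informative
          (exists p, X p /\ forall z, X z -> Enorm (vsub y p) <= Enorm (vsub y z)) with
  | left h => proj1_sig (constructive_indefinite_description _ h)
  | right _ => y
  end.

Definition polyak_run {n} (X : vec n -> Prop) (f : vec n -> R)
    (x zeta : nat -> vec n) : Prop :=
  forall k, frechet_subgrad f (x k) (zeta k) /\
    (zeta k = vzero -> x (S k) = x k) /\
    (zeta k <> vzero ->
       x (S k) = Eproj X (vsub (x k)
                   (vscal ((f (x k) - inf_on X f) / (Enorm (zeta k))^2) (zeta k)))).

(* Since the distance to the solution set need not be attained, any
      estimate at a nearby minimizer is passed to the distance by a limiting lemma.
   2. One Polyak step (section OneStep): with D the distance from x_k to the solution set,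
      weak convexity at a nearby minimizer and sharpness squeeze the gap,
      mu D <= f(x_k) - min f <= 4/3 |zeta| D, and the projected step satisfies
      dist(x_{k+1})^2 <= (1 - tau^2/2) D^2 and |x_{k+1} - x_k| <= 4/3 D, as long as x_k is
      close enough to xbar and rho D <= mu/2.
   3. The whole run (section PolyakRun): by induction the distances decay like q^k with
      q = sqrt(1 - tau^2/2), the total drift 4/3 D0 / (1 - q) stays within eps/4, so the
      one-step analysis applies forever; the geometric steps then give a Cauchy sequence
      whose limit is a minimizer, reached at the rate 16 L^3 D0 / (3 mu^3) q^k. *)

From Stdlib Require Import Reals Lra Lia Classical ClassicalEpsilon FunctionalExtensionality.
Open Scope R_scope.

Lemma Einner_add_l {n} (u v w : vec n) : Einner (vadd u v) w = Einner u w + Einner v w.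
Proof.
  induction n as [|n IH]; simpl; [ring|].
  unfold vadd in *; rewrite (IH (fun i => u (Fin.FS i)) (fun i => v (Fin.FS i))); ring.
Qed.

Lemma Einner_scal_l {n} a (u w : vec n) : Einner (vscal a u) w = a * Einner u w.
Proof.
  induction n as [|n IH]; simpl; [ring|].
  unfold vscal in *; rewrite (IH (fun i => u (Fin.FS i))); ring.
Qed.

Lemma Einner_sub_l {n} (u v w : vec n) : Einner (vsub u v) w = Einner u w - Einner v w.
Proof.
  induction n as [|n IH]; simpl; [ring|].
  unfold vsub in *; rewrite (IH (fun i => u (Fin.FS i)) (fun i => v (Fin.FS i))); ring.
Qed.

Lemma Einner_sym {n} (u v : vec n) : Einner u v = Einner v u.
Proof. induction n as [|n IH]; simpl; [ring|]. rewrite IH; ring. Qed.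

Lemma Einner_scal_r {n} a (u w : vec n) : Einner u (vscal a w) = a * Einner u w.
Proof. rewrite Einner_sym, Einner_scal_l, Einner_sym; reflexivity. Qed.

Lemma Einner_sub_swap_r {n} (w a b : vec n) : Einner w (vsub a b) = - Einner w (vsub b a).
Proof. rewrite (Einner_sym w (vsub a b)), (Einner_sym w (vsub b a)), !Einner_sub_l; ring. Qed.

Lemma Einner_nonneg {n} (u : vec n) : 0 <= Einner u u.
Proof.
  induction n as [|n IH]; simpl; [lra|].
  pose proof (IH (fun i => u (Fin.FS i))); nra.
Qed.

Lemma Einner_eq0 {n} (u : vec n) : Einner u u = 0 -> u = vzero.
Proof.
  intro H; apply functional_extensionality; revert u H.
  induction n as [|n IH]; intros u H i.
  - exact (Fin.case0 (fun i => u i = vzero i) i).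
  - simpl in H; pose proof (Einner_nonneg (fun i => u (Fin.FS i))).
    apply (Fin.caseS' i (fun i => u i = vzero i)); [unfold vzero; nra|].
    intro j; apply (IH (fun i => u (Fin.FS i))); nra.
Qed.

Lemma Einner_sq_le {n} (u v : vec n) : Einner u v ^ 2 <= Einner u u * Einner v v.
Proof.
  induction n as [|n IH]; simpl; [lra|].
  set (a := u Fin.F1); set (b := v Fin.F1).
  specialize (IH (fun i => u (Fin.FS i)) (fun i => v (Fin.FS i))).
  pose proof (Einner_nonneg (fun i => u (Fin.FS i))) as HA.
  pose proof (Einner_nonneg (fun i => v (Fin.FS i))) as HB.
  set (S := Einner (fun i => u (Fin.FS i)) (fun i => v (Fin.FS i))) in *.
  set (A := Einner (fun i => u (Fin.FS i)) (fun i => u (Fin.FS i))) in *.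
  set (B := Einner (fun i => v (Fin.FS i)) (fun i => v (Fin.FS i))) in *.
  assert (Hcross : (2 * a * b * S) ^ 2 <= (a * a * B + b * b * A) ^ 2).
  { assert (4 * (a * b) ^ 2 * S ^ 2 <= 4 * (a * b) ^ 2 * (A * B)) by (apply Rmult_le_compat_l; nra).
    pose proof (pow2_ge_0 (a * a * B - b * b * A)); nra. }
  assert (2 * a * b * S <= a * a * B + b * b * A).
  { destruct (Rle_dec (2 * a * b * S) 0); [nra|].
    apply Rsqr_incr_0_var; unfold Rsqr; nra. }
  nra.
Qed.

Lemma Enorm_nonneg {n} (u : vec n) : 0 <= Enorm u.
Proof. apply sqrt_pos. Qed.

Lemma Enorm_sq {n} (u : vec n) : Enorm u ^ 2 = Einner u u.
Proof. apply pow2_sqrt, Einner_nonneg. Qed.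

Lemma Enorm_eq0 {n} (u : vec n) : Enorm u = 0 -> u = vzero.
Proof. intro H; apply Einner_eq0; rewrite <- Enorm_sq, H; ring. Qed.

Lemma Enorm_le_sq {n} (u v : vec n) : Einner u u <= Einner v v -> Enorm u <= Enorm v.
Proof. apply sqrt_le_1_alt. Qed.

Lemma sq_le_of_Enorm_le {n} (u v : vec n) : Enorm u <= Enorm v -> Einner u u <= Einner v v.
Proof. intro H; rewrite <- !Enorm_sq; apply pow_incr; split; [apply Enorm_nonneg | exact H]. Qed.

Lemma Enorm_le_of_sq {n} (u : vec n) r : 0 <= r -> Einner u u <= r ^ 2 -> Enorm u <= r.
Proof. intros Hr H; rewrite <- (sqrt_pow2 r Hr); apply sqrt_le_1_alt, H. Qed.

Lemma Cauchy_Schwarz {n} (u v : vec n) : Einner u v <= Enorm u * Enorm v.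
Proof.
  eapply Rle_trans; [apply Rle_abs|].
  unfold Enorm; rewrite <- sqrt_Rsqr_abs, <- sqrt_mult_alt by apply Einner_nonneg.
  apply sqrt_le_1_alt; unfold Rsqr; pose proof (Einner_sq_le u v); lra.
Qed.

Lemma Einner_sub_expand {n} (u v : vec n) :
  Einner (vsub u v) (vsub u v) = Einner u u - 2 * Einner u v + Einner v v.
Proof.
  rewrite !Einner_sub_l, (Einner_sym u (vsub u v)), (Einner_sym v (vsub u v)), !Einner_sub_l,
    (Einner_sym v u); ring.
Qed.

Lemma Enorm_add {n} (u v : vec n) : Enorm (vadd u v) <= Enorm u + Enorm v.
Proof.
  pose proof (Enorm_nonneg u); pose proof (Enorm_nonneg v).
  apply Enorm_le_of_sq; [lra|].
  rewrite !Einner_add_l, (Einner_sym u), (Einner_sym v), !Einner_add_l, (Einner_sym v u),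
    <- !Enorm_sq.
  pose proof (Cauchy_Schwarz u v); nra.
Qed.

Lemma Enorm_triangle {n} (a b c : vec n) :
  Enorm (vsub a c) <= Enorm (vsub a b) + Enorm (vsub b c).
Proof.
  replace (vsub a c) with (vadd (vsub a b) (vsub b c)); [apply Enorm_add|].
  apply functional_extensionality; intro; unfold vadd, vsub; ring.
Qed.

Lemma Enorm_scal {n} a (u : vec n) : Enorm (vscal a u) = Rabs a * Enorm u.
Proof.
  unfold Enorm; rewrite Einner_scal_l, (Einner_sym u), Einner_scal_l, <- Rmult_assoc,
    sqrt_mult_alt by nra.
  rewrite <- sqrt_Rsqr_abs; reflexivity.
Qed.

Lemma Enorm_sym {n} (a b : vec n) : Enorm (vsub a b) = Enorm (vsub b a).
Proof.
  replace (vsub b a) with (vscal (-1) (vsub a b)).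
  - rewrite Enorm_scal, Rabs_left by lra; ring.
  - apply functional_extensionality; intro; unfold vsub, vscal; ring.
Qed.

Lemma Enorm_self {n} (a : vec n) : Enorm (vsub a a) = 0.
Proof.
  replace (vsub a a) with (vscal 0 a).
  - rewrite Enorm_scal, Rabs_R0; ring.
  - apply functional_extensionality; intro; unfold vsub, vscal; ring.
Qed.

Lemma Enorm_zero {n} : Enorm (@vzero n) = 0.
Proof.
  replace (@vzero n) with (vscal 0 (@vzero n)).
  - rewrite Enorm_scal, Rabs_R0; ring.
  - apply functional_extensionality; intro; unfold vzero, vscal; ring.
Qed.

Lemma parallelogram {n} (a b : vec n) :
  Einner (vsub b a) (vsub b a) + Einner (vadd a b) (vadd a b) = 2 * Einner a a + 2 * Einner b b.
Proof.
  rewrite Einner_sub_expand, !Einner_add_l, (Einner_sym a (vadd a b)),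
    (Einner_sym b (vadd a b)), !Einner_add_l, (Einner_sym b a); ring.
Qed.

Definition vcauchy {n} (u : nat -> vec n) : Prop :=
  forall e, 0 < e -> exists N, forall i j, (N <= i)%nat -> (N <= j)%nat ->
    Enorm (vsub (u i) (u j)) < e.

Definition vconverges {n} (u : nat -> vec n) (p : vec n) : Prop :=
  forall e, 0 < e -> exists N, forall k, (N <= k)%nat -> Enorm (vsub (u k) p) < e.

Lemma head_le_Enorm {n} (w : vec (S n)) : Rabs (w Fin.F1) <= Enorm w.
Proof.
  unfold Enorm; simpl; rewrite <- sqrt_Rsqr_abs; apply sqrt_le_1_alt.
  pose proof (Einner_nonneg (fun i => w (Fin.FS i))); unfold Rsqr; lra.
Qed.

Lemma tail_le_Enorm {n} (w : vec (S n)) : Enorm (fun i => w (Fin.FS i)) <= Enorm w.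
Proof. unfold Enorm; simpl; apply sqrt_le_1_alt; nra. Qed.

Lemma Enorm_cons_le {n} (w : vec (S n)) :
  Enorm w <= Rabs (w Fin.F1) + Enorm (fun i => w (Fin.FS i)).
Proof.
  pose proof (Rabs_pos (w Fin.F1)); pose proof (Enorm_nonneg (fun i => w (Fin.FS i))).
  apply Enorm_le_of_sq; [lra|]; simpl.
  pose proof (pow2_abs (w Fin.F1)); rewrite <- Enorm_sq; nra.
Qed.

Lemma vcomplete {n} (u : nat -> vec n) : vcauchy u -> exists p, vconverges u p.
Proof.
  induction n as [|n IH]; intro Hc.
  - exists vzero; intros e He; exists 0%nat; intros k _.
    unfold Enorm; simpl; rewrite sqrt_0; exact He.
  - set (h := fun k => u k Fin.F1); set (t := fun k i => u k (Fin.FS i)).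
    assert (Hh : Cauchy_crit h).
    { intros e He; destruct (Hc e He) as [N HN]; exists N; intros i j Hi Hj.
      pose proof (head_le_Enorm (vsub (u i) (u j))); specialize (HN i j Hi Hj).
      unfold Rdist, h; unfold vsub at 1 in H; lra. }
    assert (Ht : vcauchy t).
    { intros e He; destruct (Hc e He) as [N HN]; exists N; intros i j Hi Hj.
      pose proof (tail_le_Enorm (vsub (u i) (u j))); specialize (HN i j Hi Hj).
      change (Enorm (fun k => vsub (u i) (u j) (Fin.FS k)) < e); lra. }
    destruct (R_complete h Hh) as [l0 Hl0]; destruct (IH t Ht) as [p' Hp'].
    exists (fun i => Fin.caseS' i (fun _ => R) l0 p').
    intros e He; destruct (Hl0 (e / 2)) as [N1 HN1]; [lra|].
    destruct (Hp' (e / 2)) as [N2 HN2]; [lra|].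
    exists (Nat.max N1 N2); intros k Hk.
    specialize (HN1 k ltac:(lia)); specialize (HN2 k ltac:(lia)); unfold Rdist, h in HN1.
    eapply Rle_lt_trans; [apply Enorm_cons_le|].
    change (Rabs (u k Fin.F1 - l0) + Enorm (vsub (t k) p') < e); lra.
Qed.

Lemma le_of_le_plus_small A B C d0 :
  0 < d0 -> (forall d, 0 < d -> d <= d0 -> A <= B + C * d) -> A <= B.
Proof.
  intros Hd0 H; apply Rnot_lt_le; intro Hlt.
  set (d := Rmin d0 ((A - B) / (2 * (Rabs C + 1)))).
  pose proof (Rabs_pos C); pose proof (Rle_abs C).
  assert (Hd : 0 < d) by (apply Rmin_glb_lt; [lra | apply Rdiv_lt_0_compat; lra]).
  assert (Hdd : d * (2 * (Rabs C + 1)) <= A - B).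
  { apply (Rmult_le_reg_r (/ (2 * (Rabs C + 1)))); [apply Rinv_0_lt_compat; lra|].
    rewrite Rmult_assoc, Rinv_r, Rmult_1_r by lra; apply Rmin_r. }
  specialize (H d Hd (Rmin_l _ _)); nra.
Qed.

Lemma inv_succ_small eta : 0 < eta -> exists N, forall j, (N <= j)%nat -> / INR (S j) < eta.
Proof.
  intro H; destruct (archimed_cor1 eta H) as [N [HN HN0]]; exists N; intros j Hj.
  eapply Rle_lt_trans; [|exact HN].
  apply Rinv_le_contravar; [apply lt_0_INR; lia | apply le_INR; lia].
Qed.

Lemma le_sqrt_mul_of_sq a b c : 0 <= a -> 0 <= b -> a ^ 2 <= c * b ^ 2 -> a <= sqrt c * b.
Proof.
  intros Ha Hb H; destruct (Rle_dec 0 c) as [Hc|Hc].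
  - rewrite <- (sqrt_pow2 a Ha), <- (sqrt_pow2 b Hb), <- sqrt_mult_alt by exact Hc.
    apply sqrt_le_1_alt, H.
  - rewrite sqrt_neg_0 by lra; nra.
Qed.

Lemma pow_unit_interval q k : 0 <= q <= 1 -> 0 <= q ^ k <= 1.
Proof. intro Hq; split; [apply pow_le, Hq|]; rewrite <- (pow1 k); apply pow_incr, Hq. Qed.

Lemma sqrt_pow_comm c k : 0 <= c -> sqrt (c ^ k) = sqrt c ^ k.
Proof.
  intro Hc; induction k as [|k IH]; simpl; [apply sqrt_1|].
  rewrite sqrt_mult_alt, IH by exact Hc; reflexivity.
Qed.

Lemma contraction_rate_range t : 0 < t -> 0 <= sqrt (1 - t ^ 2 / 2) < 1.
Proof.
  intro Ht; split; [apply sqrt_pos|].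
  destruct (Rle_dec 0 (1 - t ^ 2 / 2)).
  - apply Rlt_le_trans with (sqrt 1); [apply sqrt_lt_1_alt; nra | rewrite sqrt_1; lra].
  - rewrite sqrt_neg_0 by lra; lra.
Qed.

Lemma contraction_rate_bounds t :
  0 < t <= 4 / 3 ->
  sqrt (1 - t ^ 2 / 2) <= 1 - t ^ 2 / 4 /\ sqrt (1 - t ^ 2 / 2) <= 1 - t ^ 3 / 4.
Proof.
  intro Ht; assert (Ht2 : t ^ 2 <= 16 / 9) by nra; split.
  - rewrite <- (sqrt_pow2 (1 - t ^ 2 / 4)) by nra; apply sqrt_le_1_alt; nra.
  - assert (0 <= 1 - t ^ 3 / 4) by nra.
    rewrite <- (sqrt_pow2 (1 - t ^ 3 / 4)) by assumption; apply sqrt_le_1_alt.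
    assert (E : (1 - t ^ 3 / 4) ^ 2 - (1 - t ^ 2 / 2)
                = t ^ 2 * ((t ^ 2 - 2) ^ 2 + 4 * (t - 1) ^ 2) / 16) by field.
    pose proof (pow2_ge_0 t); pose proof (pow2_ge_0 (t ^ 2 - 2)); pose proof (pow2_ge_0 (t - 1)).
    assert (0 <= t ^ 2 * ((t ^ 2 - 2) ^ 2 + 4 * (t - 1) ^ 2)) by (apply Rmult_le_pos; lra).
    lra.
Qed.

Lemma glb_exists (A : R -> Prop) :
  (exists a, A a) -> (exists m, forall a, A a -> m <= a) -> exists m, Eis_glb A m.
Proof.
  intros [a Ha] [m Hm].
  destruct (completeness (fun x => A (- x))) as [M [HM1 HM2]].
  - exists (- m); intros x Hx; specialize (Hm _ Hx); lra.
  - exists (- a); rewrite Ropp_involutive; exact Ha.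
  - exists (- M); split.
    + intros b Hb; assert (b' : A (- - b)) by (rewrite Ropp_involutive; exact Hb).
      specialize (HM1 _ b'); lra.
    + intros b Hb; assert (M <= - b) by (apply HM2; intros x Hx; specialize (Hb _ Hx); lra); lra.
Qed.

Lemma EInf_spec (A : R -> Prop) : (exists m, Eis_glb A m) -> Eis_glb A (EInf A).
Proof.
  intro H; unfold EInf; destruct (excluded_middle_informative _) as [h|h]; [|contradiction].
  exact (proj2_sig (constructive_indefinite_description _ h)).
Qed.

Lemma EInf_eq (A : R -> Prop) m : Eis_glb A m -> EInf A = m.
Proof.
  intro Hm; destruct (EInf_spec A (ex_intro _ m Hm)) as [H1 H2]; destruct Hm as [H3 H4].
  apply Rle_antisym; [apply H4, H1 | apply H2, H3].
Qed.

Section Distance.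
Context {n : nat} (S : vec n -> Prop) (HS : exists y, S y).

Lemma Edist_glb x : Eis_glb (fun d => exists y, S y /\ d = Enorm (vsub x y)) (Edist x S).
Proof.
  apply EInf_spec, glb_exists.
  - destruct HS as [y Hy]; eauto.
  - exists 0; intros a [y [_ ->]]; apply Enorm_nonneg.
Qed.

Lemma Edist_le x y : S y -> Edist x S <= Enorm (vsub x y).
Proof. intro Hy; apply (proj1 (Edist_glb x)); eauto. Qed.

Lemma Edist_nonneg x : 0 <= Edist x S.
Proof. apply (proj2 (Edist_glb x)); intros a [y [_ ->]]; apply Enorm_nonneg. Qed.

Lemma Edist_approx x d : 0 < d -> exists y, S y /\ Enorm (vsub x y) < Edist x S + d.
Proof.
  intro Hd; apply NNPP; intro Hnone.
  assert (Edist x S + d <= Edist x S); [|lra].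
  apply (proj2 (Edist_glb x)); intros a [y [Hy ->]].
  apply Rnot_lt_le; intro Hlt; apply Hnone; eauto.
Qed.

Lemma bound_by_distance (c x : vec n) (r alpha beta gamma B : R) :
  Enorm (vsub x c) + Edist x S < r -> 0 <= beta -> 0 <= gamma ->
  (forall y, S y -> Eball c r y ->
     B <= alpha + beta * Enorm (vsub x y) + gamma * Enorm (vsub x y) ^ 2) ->
  B <= alpha + beta * Edist x S + gamma * Edist x S ^ 2.
Proof.
  intros Hr Hb Hg Hbound; pose proof (Edist_nonneg x) as HD; set (D := Edist x S) in *.
  set (d0 := r - Enorm (vsub x c) - D).
  apply (le_of_le_plus_small _ _ (beta + gamma * (2 * D + d0)) d0); [unfold d0; lra|].
  intros d Hd Hdd0; destruct (Edist_approx x d Hd) as [y [Sy Hy]]; fold D in Hy.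
  assert (Bc : Eball c r y).
  { unfold Eball; pose proof (Enorm_triangle y x c); rewrite (Enorm_sym y x) in H.
    unfold d0 in Hdd0; lra. }
  specialize (Hbound y Sy Bc); pose proof (Enorm_nonneg (vsub x y)).
  assert (Enorm (vsub x y) ^ 2 <= (D + d) ^ 2) by (apply pow_incr; lra).
  assert (gamma * Enorm (vsub x y) ^ 2 <= gamma * (D + d) ^ 2) by (apply Rmult_le_compat_l; lra).
  assert (beta * Enorm (vsub x y) <= beta * (D + d)) by (apply Rmult_le_compat_l; lra).
  assert (gamma * (d * d) <= gamma * (d * d0)) by (apply Rmult_le_compat_l; nra).
  nra.
Qed.

End Distance.

Section Projection.
Context {n : nat} (X : vec n -> Prop)
  (HXne : exists x, X x) (HXcl : Eclosed_set X) (HXcv : Econvex_set X).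

(* Two almost-nearest points of a convex set are close (parallelogram law at the midpoint). *)
Lemma almost_nearest_close y z1 z2 eta :
  X z1 -> X z2 -> 0 <= eta ->
  Enorm (vsub y z1) <= Edist y X + eta -> Enorm (vsub y z2) <= Edist y X + eta ->
  Einner (vsub z1 z2) (vsub z1 z2) <= 8 * Edist y X * eta + 4 * eta ^ 2.
Proof.
  intros X1 X2 Heta H1 H2; pose proof (Edist_nonneg X HXne y) as Hm.
  set (m := Edist y X) in *.
  set (a := vsub y z1) in *; set (b := vsub y z2) in *.
  assert (Emid : vsub y (vadd (vscal (1 / 2) z1) (vscal (1 - 1 / 2) z2)) = vscal (1 / 2) (vadd a b))
    by (apply functional_extensionality; intro; unfold a, b, vsub, vadd, vscal; field).
  assert (Hmid : m <= Enorm (vscal (1 / 2) (vadd a b))).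
  { rewrite <- Emid; apply Edist_le; [exact HXne|]; apply HXcv; auto; lra. }
  rewrite Enorm_scal, Rabs_right in Hmid by lra.
  assert (Eab : vsub z1 z2 = vsub b a)
    by (apply functional_extensionality; intro; unfold a, b, vsub; ring).
  pose proof (parallelogram a b) as Hpar; rewrite <- !Enorm_sq in Hpar.
  pose proof (Enorm_nonneg a); pose proof (Enorm_nonneg b).
  assert (Enorm a ^ 2 <= (m + eta) ^ 2) by (apply pow_incr; split; lra).
  assert (Enorm b ^ 2 <= (m + eta) ^ 2) by (apply pow_incr; split; lra).
  assert ((2 * m) ^ 2 <= Enorm (vadd a b) ^ 2) by (apply pow_incr; split; lra).
  rewrite Eab, <- Enorm_sq; nra.
Qed.

(* A nonempty closed convex set contains a nearest point to y: a minimizing sequence is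
   Cauchy by almost_nearest_close, and its limit stays in the set. *)
Lemma nearest_point_exists y :
  exists p, X p /\ forall z, X z -> Enorm (vsub y p) <= Enorm (vsub y z).
Proof.
  pose proof (Edist_nonneg X HXne y) as Hm; set (m := Edist y X) in *.
  assert (Happrox : forall j : nat, exists z, X z /\ Enorm (vsub y z) < m + / INR (S j))
    by (intro j; apply Edist_approx; [exact HXne|]; apply Rinv_0_lt_compat, lt_0_INR; lia).
  destruct (choice _ Happrox) as [zs Hzs].
  assert (Hcauchy : vcauchy zs).
  { intros e He; set (eta := Rmin 1 (e ^ 2 / (8 * m + 8))).
    assert (Heta : 0 < eta) by (apply Rmin_glb_lt; [lra | apply Rdiv_lt_0_compat; nra]).
    assert (Heta_e : eta * (8 * m + 8) <= e ^ 2).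
    { apply (Rmult_le_reg_r (/ (8 * m + 8))); [apply Rinv_0_lt_compat; lra|].
      rewrite Rmult_assoc, Rinv_r, Rmult_1_r by lra; apply Rmin_r. }
    pose proof (Rmin_l 1 (e ^ 2 / (8 * m + 8))); fold eta in H.
    destruct (inv_succ_small eta Heta) as [N HN]; exists N; intros i j Hi Hj.
    destruct (Hzs i) as [Xi Hyi]; destruct (Hzs j) as [Xj Hyj].
    specialize (HN i Hi) as Ei; specialize (HN j Hj) as Ej.
    assert (Einner (vsub (zs i) (zs j)) (vsub (zs i) (zs j)) <= 8 * m * eta + 4 * eta ^ 2)
      by (apply almost_nearest_close; auto; fold m; lra).
    assert (8 * m * eta + 4 * eta ^ 2 < e ^ 2) by nra.
    pose proof (Enorm_sq (vsub (zs i) (zs j))); pose proof (Enorm_nonneg (vsub (zs i) (zs j))).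
    nra. }
  destruct (vcomplete zs Hcauchy) as [p Hp]; exists p; split.
  - apply HXcl; intros e He; destruct (Hp e He) as [N HN]; exists (zs N).
    split; [apply Hzs | rewrite Enorm_sym; apply HN; lia].
  - intros z Hz; apply Rle_trans with m; [|apply Edist_le; auto].
    apply (le_of_le_plus_small _ _ 2 1); [lra|]; intros d Hd _.
    destruct (Hp d Hd) as [N1 HN1]; destruct (inv_succ_small d Hd) as [N2 HN2].
    specialize (HN1 (Nat.max N1 N2) ltac:(lia)); specialize (HN2 (Nat.max N1 N2) ltac:(lia)).
    pose proof (Enorm_triangle y (zs (Nat.max N1 N2)) p); destruct (Hzs (Nat.max N1 N2)); lra.
Qed.

Lemma nearest_point_obtuse y p :
  X p -> (forall z, X z -> Enorm (vsub y p) <= Enorm (vsub y z)) ->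
  forall z, X z -> Einner (vsub y p) (vsub z p) <= 0.
Proof.
  intros Xp Hmin z Xz.
  apply (le_of_le_plus_small _ 0 (Einner (vsub z p) (vsub z p) / 2) 1); [lra|].
  intros t Ht Ht1.
  assert (Xt : X (vadd (vscal t z) (vscal (1 - t) p))) by (apply HXcv; auto; lra).
  assert (Et : vsub y (vadd (vscal t z) (vscal (1 - t) p)) = vsub (vsub y p) (vscal t (vsub z p)))
    by (apply functional_extensionality; intro; unfold vsub, vadd, vscal; ring).
  specialize (Hmin _ Xt); rewrite Et in Hmin.
  apply sq_le_of_Enorm_le in Hmin.
  rewrite (Einner_sub_expand (vsub y p)), Einner_scal_l, !Einner_scal_r in Hmin.
  pose proof (Einner_nonneg (vsub z p)); nra.
Qed.

Lemma Eproj_spec y :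
  X (Eproj X y) /\ forall z, X z -> Enorm (vsub (Eproj X y) z) <= Enorm (vsub y z).
Proof.
  unfold Eproj; destruct (excluded_middle_informative _) as [h|h];
    [|contradiction (h (nearest_point_exists y))].
  destruct (constructive_indefinite_description _ h) as [p [Xp Hmin]]; simpl.
  split; [exact Xp|]; intros z Xz.
  pose proof (nearest_point_obtuse y p Xp Hmin z Xz).
  assert (Ez : vsub y z = vsub (vsub y p) (vsub z p))
    by (apply functional_extensionality; intro; unfold vsub; ring).
  rewrite Enorm_sym; apply Enorm_le_sq.
  rewrite Ez, (Einner_sub_expand (vsub y p)); pose proof (Einner_nonneg (vsub y p)); lra.
Qed.

End Projection.

Lemma geometric_drift {n} (u : nat -> vec n) K q k m :
  0 <= q < 1 -> (forall j, Enorm (vsub (u (S j)) (u j)) <= K * q ^ j) ->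
  Enorm (vsub (u (k + m)%nat) (u k)) <= K * (q ^ k - q ^ (k + m)) / (1 - q).
Proof.
  intros Hq Hstep; induction m as [|m IH].
  - rewrite Nat.add_0_r, Enorm_self; right; field; lra.
  - rewrite Nat.add_succ_r.
    pose proof (Enorm_triangle (u (S (k + m))) (u (k + m)%nat) (u k)).
    specialize (Hstep (k + m)%nat); simpl pow.
    replace (K * (q ^ k - q * q ^ (k + m)) / (1 - q))
      with (K * q ^ (k + m) + K * (q ^ k - q ^ (k + m)) / (1 - q)) by (field; lra).
    lra.
Qed.

Lemma geometric_steps_converge {n} (u : nat -> vec n) K q :
  0 <= q < 1 -> (forall j, Enorm (vsub (u (S j)) (u j)) <= K * q ^ j) ->
  exists p, vconverges u p /\ forall k, Enorm (vsub (u k) p) <= K * q ^ k / (1 - q).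
Proof.
  intros Hq Hstep.
  assert (HK : 0 <= K).
  { specialize (Hstep 0%nat); pose proof (Enorm_nonneg (vsub (u 1%nat) (u 0%nat))).
    simpl in Hstep; lra. }
  assert (Htail : forall k m, Enorm (vsub (u (k + m)%nat) (u k)) <= K * q ^ k / (1 - q)).
  { intros k m; pose proof (geometric_drift u K q k m Hq Hstep).
    assert (K * (q ^ k - q ^ (k + m)) / (1 - q) <= K * q ^ k / (1 - q)); [|lra].
    unfold Rdiv; apply Rmult_le_compat_r; [apply Rlt_le, Rinv_0_lt_compat; lra|].
    pose proof (pow_le q (k + m) (proj1 Hq)); nra. }
  assert (Hsmall : forall e, 0 < e -> exists N, K * q ^ N / (1 - q) < e).
  { intros e He; destruct (pow_lt_1_zero q ltac:(rewrite Rabs_right; lra) (e * (1 - q) / (K + 1)))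
      as [N HN]; [apply Rdiv_lt_0_compat; nra|].
    exists N; specialize (HN N (le_n N)); rewrite Rabs_right in HN by (apply Rle_ge, pow_le; lra).
    apply (Rmult_lt_reg_r (1 - q)); [lra|].
    unfold Rdiv; rewrite Rmult_assoc, Rinv_l, Rmult_1_r by lra.
    apply (Rmult_lt_compat_l (K + 1)) in HN; [|lra].
    replace ((K + 1) * (e * (1 - q) / (K + 1))) with (e * (1 - q)) in HN by (field; lra).
    pose proof (pow_le q N (proj1 Hq)); nra. }
  assert (Hcauchy : vcauchy u).
  { intros e He; destruct (Hsmall (e / 2)) as [N HN]; [lra|]; exists N; intros i j Hi Hj.
    pose proof (Htail N (i - N)%nat) as Ti; pose proof (Htail N (j - N)%nat) as Tj.
    replace (N + (i - N))%nat with i in Ti by lia; replace (N + (j - N))%nat with j in Tj by lia.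
    pose proof (Enorm_triangle (u i) (u N) (u j)); rewrite (Enorm_sym (u N)) in H; lra. }
  destruct (vcomplete u Hcauchy) as [p Hp]; exists p; split; [exact Hp|].
  intro k; apply (le_of_le_plus_small _ _ 1 1); [lra|]; intros d Hd _.
  destruct (Hp d Hd) as [M HM]; specialize (HM (k + M)%nat ltac:(lia)).
  pose proof (Enorm_triangle (u k) (u (k + M)%nat) p).
  rewrite (Enorm_sym (u k) (u (k + M)%nat)) in H.
  specialize (Htail k M); lra.
Qed.

Lemma continuous_limit_le {n} (f : vec n -> R) (u : nat -> vec n) p b :
  Econtinuous_fun f -> vconverges u p ->
  (forall e, 0 < e -> exists N, forall k, (N <= k)%nat -> f (u k) <= b + e) -> f p <= b.
Proof.
  intros Hf Hu Hb; apply (le_of_le_plus_small _ _ 2 1); [lra|]; intros e He _.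
  destruct (Hf p e He) as [d [Hd Hfd]]; destruct (Hu d Hd) as [N1 HN1].
  destruct (Hb e He) as [N2 HN2]; set (k := Nat.max N1 N2).
  specialize (Hfd (u k) (HN1 k ltac:(lia))); specialize (HN2 k ltac:(lia)).
  apply Rabs_def2 in Hfd; lra.
Qed.

Lemma inf_on_argmin {n} (X : vec n -> Prop) f xbar : argmin_on X f xbar -> inf_on X f = f xbar.
Proof.
  intros [Xx Hmin]; apply EInf_eq; split.
  - intros a [x [Hx ->]]; apply Hmin, Hx.
  - intros b Hb; apply Hb; eauto.
Qed.

Lemma polyak_decrease_bound mu D a N L :
  0 < mu -> 0 <= D -> mu * D <= a -> 0 < N <= L -> (mu / L) ^ 2 * D ^ 2 <= (a / N) ^ 2.
Proof.
  intros Hmu HD Ha HN; rewrite <- Rpow_mult_distr; apply pow_incr; split.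
  - apply Rmult_le_pos; [apply Rlt_le, Rdiv_lt_0_compat|]; lra.
  - apply (Rmult_le_reg_r N); [lra|]; replace (a / N * N) with a by (field; lra).
    replace (mu / L * D * N) with (mu * D * (N / L)) by (field; lra).
    assert (N / L <= 1).
    { apply (Rmult_le_reg_r L); [lra|]; replace (N / L * L) with N by (field; lra); lra. }
    assert (0 <= mu * D) by nra; nra.
Qed.

Set Implicit Arguments.
Record local_regularity {n} (X : vec n -> Prop) (f : vec n -> R) (xbar : vec n)
    (eps mu rho : R) : Prop := {
  lr_nonempty : exists x, X x;
  lr_closed : Eclosed_set X;
  lr_convex : Econvex_set X;
  lr_continuous : Econtinuous_fun f;
  lr_minimizer : argmin_on X f xbar;
  lr_eps : 0 < eps;
  lr_mu : 0 < mu;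
  lr_rho : 0 < rho;
  lr_weakly_convex : forall x y zeta, X x -> Eball xbar eps x -> X y -> Eball xbar eps y ->
    frechet_subgrad f x zeta ->
    f y >= f x + Einner zeta (vsub y x) - rho / 2 * (Enorm (vsub y x)) ^ 2;
  lr_sharp : forall x, X x -> Eball xbar eps x ->
    f x - inf_on X f >= mu * Edist x (argmin_on X f) }.
Unset Implicit Arguments.

Section OneStep.
Context {n : nat} {X : vec n -> Prop} {f : vec n -> R} {xbar : vec n} {eps mu rho : R}
  (LR : local_regularity X f xbar eps mu rho).

Local Notation dist x := (Edist x (argmin_on X f)).
Local Notation fstar := (inf_on X f).

Let HS : exists y, argmin_on X f y := ex_intro _ xbar (lr_minimizer LR).

Lemma fstar_value : fstar = f xbar.
Proof. exact (inf_on_argmin X f xbar (lr_minimizer LR)). Qed.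

Lemma model_at_solution xk zk xs :
  X xk -> Eball xbar eps xk -> frechet_subgrad f xk zk ->
  argmin_on X f xs -> Eball xbar eps xs ->
  f xk - fstar <= Einner zk (vsub xk xs) + rho / 2 * Enorm (vsub xk xs) ^ 2.
Proof.
  intros Xk Bk Hz [Xs Hmin] Bs.
  pose proof (Hmin xbar (proj1 (lr_minimizer LR))); pose proof (proj2 (lr_minimizer LR) xs Xs).
  pose proof (lr_weakly_convex LR Xk Bk Xs Bs Hz).
  rewrite Einner_sub_swap_r, (Enorm_sym xs xk) in H1; rewrite fstar_value; lra.
Qed.

Lemma gap_sandwich xk zk :
  X xk -> Enorm (vsub xk xbar) + dist xk < eps -> rho * dist xk <= mu / 2 ->
  frechet_subgrad f xk zk ->
  mu * dist xk <= f xk - fstar <= 4 / 3 * Enorm zk * dist xk.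
Proof.
  intros Xk Hr HrhoD Hz; pose proof (Edist_nonneg _ HS xk) as HD.
  assert (Bk : Eball xbar eps xk) by (unfold Eball; lra).
  pose proof (Rge_le _ _ (lr_sharp LR Xk Bk)) as Hsharp.
  assert (Hgap : f xk - fstar <= 0 + Enorm zk * dist xk + rho / 2 * dist xk ^ 2).
  { apply (bound_by_distance _ HS xbar xk eps); auto;
      [apply Enorm_nonneg | pose proof (lr_rho LR); lra|].
    intros xs Sxs Bs; pose proof (model_at_solution xk zk xs Xk Bk Hz Sxs Bs).
    pose proof (Cauchy_Schwarz zk (vsub xk xs)); lra. }
  assert (rho / 2 * dist xk ^ 2 <= mu / 4 * dist xk) by nra.
  assert (mu * dist xk <= 4 / 3 * Enorm zk * dist xk) by nra.
  split; nra.
Qed.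

Lemma projected_step_distance xk zk s :
  X xk -> Enorm (vsub xk xbar) + dist xk < eps -> frechet_subgrad f xk zk -> 0 <= s ->
  dist (Eproj X (vsub xk (vscal s zk))) ^ 2
    <= - 2 * s * (f xk - fstar) + s ^ 2 * Enorm zk ^ 2 + (1 + s * rho) * dist xk ^ 2.
Proof.
  intros Xk Hr Hz Hs; pose proof (Edist_nonneg _ HS xk).
  assert (Bk : Eball xbar eps xk) by (unfold Eball; lra).
  set (y := vsub xk (vscal s zk)); set (x1 := Eproj X y).
  replace (- 2 * s * (f xk - fstar) + s ^ 2 * Enorm zk ^ 2 + (1 + s * rho) * dist xk ^ 2)
    with (- 2 * s * (f xk - fstar) + s ^ 2 * Enorm zk ^ 2 + 0 * dist xk
          + (1 + s * rho) * dist xk ^ 2)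
    by ring.
  apply (bound_by_distance _ HS xbar xk eps); auto; [lra | pose proof (lr_rho LR); nra|].
  intros xs Sxs Bs; pose proof (model_at_solution xk zk xs Xk Bk Hz Sxs Bs) as Hmodel.
  destruct (Eproj_spec X (lr_nonempty LR) (lr_closed LR) (lr_convex LR) y) as [_ Hproj].
  assert (Hd1 : dist x1 <= Enorm (vsub y xs)).
  { eapply Rle_trans; [apply (Edist_le _ HS), Sxs | apply Hproj, (proj1 Sxs)]. }
  assert (Ey : vsub y xs = vsub (vsub xk xs) (vscal s zk))
    by (apply functional_extensionality; intro; unfold y, vsub, vscal; ring).
  assert (Hsq : dist x1 ^ 2 <= Enorm (vsub y xs) ^ 2)
    by (apply pow_incr; split; [apply (Edist_nonneg _ HS) | exact Hd1]).
  rewrite Ey, Enorm_sq, (Einner_sub_expand (vsub xk xs)), Einner_scal_l, !Einner_scal_r,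
    (Einner_sym (vsub xk xs) zk), <- !Enorm_sq in Hsq.
  pose proof (Enorm_nonneg (vsub xk xs)); pose proof (lr_rho LR); nra.
Qed.

Lemma polyak_step xk zk xk1 L :
  X xk -> Enorm (vsub xk xbar) + dist xk < eps -> rho * dist xk <= mu / 2 ->
  frechet_subgrad f xk zk -> Enorm zk <= L ->
  (zk = vzero -> xk1 = xk) ->
  (zk <> vzero -> xk1 = Eproj X (vsub xk (vscal ((f xk - fstar) / Enorm zk ^ 2) zk))) ->
  X xk1 /\ dist xk1 ^ 2 <= (1 - (mu / L) ^ 2 / 2) * dist xk ^ 2 /\
  Enorm (vsub xk1 xk) <= 4 / 3 * dist xk.
Proof.
  intros Xk Hr HrhoD Hz HNL Hnull Hstep; pose proof (Edist_nonneg _ HS xk) as HD.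
  pose proof (lr_mu LR); pose proof (lr_rho LR).
  destruct (gap_sandwich xk zk Xk Hr HrhoD Hz) as [Hlow Hup].
  set (a := f xk - fstar) in *; set (N := Enorm zk) in *; set (D := dist xk) in *.
  destruct (Req_dec N 0) as [HN0|HN0].
  - (* a null subgradient forces xk onto the solution set, and the method stops *)
    rewrite Hnull by (apply Enorm_eq0, HN0).
    assert (HD0 : D = 0) by (rewrite HN0 in Hup; nra).
    rewrite Enorm_self; fold D; rewrite HD0; repeat split; auto; lra.
  - assert (HNpos : 0 < N) by (pose proof (Enorm_nonneg zk); fold N in H1; lra).
    rewrite Hstep by (intro E; apply HN0; unfold N; rewrite E; apply Enorm_zero); fold a N.
    set (s := a / N ^ 2).
    assert (Hs : 0 <= s) by (apply Rmult_le_pos; [nra | apply Rlt_le, Rinv_0_lt_compat; nra]).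
    assert (HsN : s * N ^ 2 = a) by (unfold s; field; lra).
    destruct (Eproj_spec X (lr_nonempty LR) (lr_closed LR) (lr_convex LR) (vsub xk (vscal s zk)))
      as [X1 Hproj].
    split; [exact X1|]; split.
    + pose proof (projected_step_distance xk zk s Xk Hr Hz Hs) as Hdist; fold a N D in Hdist.
      assert (rho * D ^ 2 <= a / 2) by nra.
      assert (Hsa : (mu / L) ^ 2 * D ^ 2 <= s * a).
      { replace (s * a) with ((a / N) ^ 2) by (unfold s; field; lra).
        apply polyak_decrease_bound; lra. }
      nra.
    + eapply Rle_trans; [apply Hproj, Xk|].
      replace (vsub (vsub xk (vscal s zk)) xk) with (vscal (- s) zk)
        by (apply functional_extensionality; intro; unfold vsub, vscal; ring).
      rewrite Enorm_scal, Rabs_left1 by lra; fold N.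
      replace (- - s * N) with (a / N) by (unfold s; field; lra).
      apply (Rmult_le_reg_r N); [lra|]; replace (a / N * N) with a by (field; lra); lra.
Qed.

End OneStep.

Section PolyakRun.
Context {n : nat} {X : vec n -> Prop} {f : vec n -> R} {xbar : vec n} {eps mu rho L : R}
  (LR : local_regularity X f xbar eps mu rho)
  (HL : is_lub (fun r => exists x zeta, X x /\ Eball xbar eps x /\
                  frechet_subgrad f x zeta /\ r = Enorm zeta) L)
  (HLpos : 0 < L)
  {x zeta : nat -> vec n} (Hrun : polyak_run X f x zeta)
  (Hx0 : X (x 0%nat) /\ Eball xbar (eps / 4) (x 0%nat))
  (Hd0 : Edist (x 0%nat) (argmin_on X f)
         <= Rmin (3 * eps * mu ^ 2 / (64 * L ^ 2)) (mu / (2 * rho))).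

Local Notation dist x := (Edist x (argmin_on X f)).
Local Notation D0 := (dist (x 0%nat)).
Local Notation rate := (sqrt (1 - (mu / L) ^ 2 / 2)).

Let HS : exists y, argmin_on X f y := ex_intro _ xbar (lr_minimizer LR).

Lemma rate_range : 0 <= rate < 1.
Proof. apply contraction_rate_range, Rdiv_lt_0_compat; [exact (lr_mu LR) | exact HLpos]. Qed.

Lemma subgrad_le_L xk zk : X xk -> Eball xbar eps xk -> frechet_subgrad f xk zk -> Enorm zk <= L.
Proof. intros Xk Bk Hz; apply (proj1 HL); exists xk, zk; auto. Qed.

Lemma initial_dist_bounds :
  D0 <= eps / 4 /\ rho * D0 <= mu / 2 /\ D0 <= 3 * eps * mu ^ 2 / (64 * L ^ 2).
Proof.
  pose proof (Edist_le _ HS (x 0%nat) xbar (lr_minimizer LR)); destruct Hx0 as [_ B0].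
  pose proof (Rmin_l (3 * eps * mu ^ 2 / (64 * L ^ 2)) (mu / (2 * rho))).
  pose proof (Rmin_r (3 * eps * mu ^ 2 / (64 * L ^ 2)) (mu / (2 * rho))).
  pose proof (lr_rho LR); unfold Eball in B0; split; [lra | split; [|lra]].
  replace (mu / 2) with (rho * (mu / (2 * rho))) by (field; lra).
  apply Rmult_le_compat_l; lra.
Qed.

(* Unless x0 already solves the problem, sharpness forces mu/L <= 4/3. *)
Lemma tau_le_4_3 : 0 < D0 -> mu / L <= 4 / 3.
Proof.
  intro HD0; destruct initial_dist_bounds as [Heps [Hrho _]]; destruct Hx0 as [X0 B0].
  unfold Eball in B0; destruct (Hrun 0%nat) as [Hz _]; pose proof (lr_eps LR).
  assert (Hr : Enorm (vsub (x 0%nat) xbar) + D0 < eps) by lra.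
  destruct (gap_sandwich LR _ _ X0 Hr Hrho Hz) as [Hlow Hup].
  pose proof (subgrad_le_L _ _ X0 ltac:(unfold Eball; lra) Hz).
  apply (Rmult_le_reg_r L); [exact HLpos|]; replace (mu / L * L) with mu by (field; lra).
  apply (Rmult_le_reg_r D0); [exact HD0|]; nra.
Qed.

Lemma drift_budget : 4 / 3 * D0 / (1 - rate) <= eps / 4.
Proof.
  destruct rate_range as [Hq0 Hq1]; destruct initial_dist_bounds as [_ [_ HD0]].
  pose proof (lr_mu LR); pose proof (Edist_nonneg _ HS (x 0%nat)).
  destruct (Req_dec D0 0) as [E|E]; [rewrite E; pose proof (lr_eps LR); unfold Rdiv; nra|].
  assert (Htau : 0 < mu / L <= 4 / 3) by (split; [apply Rdiv_lt_0_compat|apply tau_le_4_3]; lra).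
  destruct (contraction_rate_bounds _ Htau) as [Hq _].
  apply (Rmult_le_reg_r (1 - rate)); [lra|].
  replace (4 / 3 * D0 / (1 - rate) * (1 - rate)) with (4 / 3 * D0) by (field; lra).
  apply Rle_trans with (eps / 4 * ((mu / L) ^ 2 / 4));
    [|apply Rmult_le_compat_l; pose proof (lr_eps LR); lra].
  replace (eps / 4 * ((mu / L) ^ 2 / 4)) with (4 / 3 * (3 * eps * mu ^ 2 / (64 * L ^ 2)))
    by (field; lra).
  apply Rmult_le_compat_l; lra.
Qed.

Lemma near_start_is_local xk :
  Enorm (vsub xk (x 0%nat)) <= 4 / 3 * D0 / (1 - rate) -> dist xk <= D0 ->
  Enorm (vsub xk xbar) + dist xk < eps /\ rho * dist xk <= mu / 2.
Proof.
  intros Hdrift HD; destruct initial_dist_bounds as [Heps [Hrho _]]; destruct Hx0 as [_ B0].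
  pose proof drift_budget; pose proof (Enorm_triangle xk (x 0%nat) xbar); pose proof (lr_eps LR).
  unfold Eball in B0; split; [lra|]; pose proof (lr_rho LR); nra.
Qed.

Lemma step_from_local k :
  X (x k) -> Enorm (vsub (x k) (x 0%nat)) <= 4 / 3 * D0 / (1 - rate) -> dist (x k) <= D0 ->
  X (x (S k)) /\ dist (x (S k)) ^ 2 <= (1 - (mu / L) ^ 2 / 2) * dist (x k) ^ 2 /\
  Enorm (vsub (x (S k)) (x k)) <= 4 / 3 * dist (x k).
Proof.
  intros Xk Hdrift HD; destruct (near_start_is_local _ Hdrift HD) as [Hr Hrho].
  destruct (Hrun k) as [Hz [Hnull Hstep]]; pose proof (Edist_nonneg _ HS (x k)).
  assert (HzL : Enorm (zeta k) <= L) by (apply (subgrad_le_L _ _ Xk); [unfold Eball|]; auto; lra).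
  exact (polyak_step LR _ _ _ _ Xk Hr Hrho Hz HzL Hnull Hstep).
Qed.

Lemma budget_of_invariant xk k :
  dist xk <= rate ^ k * D0 ->
  Enorm (vsub xk (x 0%nat)) <= 4 / 3 * D0 * (1 - rate ^ k) / (1 - rate) ->
  Enorm (vsub xk (x 0%nat)) <= 4 / 3 * D0 / (1 - rate) /\ dist xk <= D0.
Proof.
  intros HD Hdrift; destruct rate_range as [Hq0 Hq1]; pose proof (Edist_nonneg _ HS (x 0%nat)).
  assert (Hqk : 0 <= rate ^ k <= 1) by (apply pow_unit_interval; lra).
  split; [|nra]; eapply Rle_trans; [exact Hdrift|]; unfold Rdiv.
  apply Rmult_le_compat_r; [apply Rlt_le, Rinv_0_lt_compat; lra | nra].
Qed.

Lemma iterates_invariant k :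
  X (x k) /\ dist (x k) <= rate ^ k * D0 /\
  Enorm (vsub (x k) (x 0%nat)) <= 4 / 3 * D0 * (1 - rate ^ k) / (1 - rate).
Proof.
  destruct rate_range as [Hq0 Hq1]; pose proof (Edist_nonneg _ HS (x 0%nat)).
  induction k as [|k [Xk [HDk Hdrift]]].
  - rewrite Enorm_self, pow_O, Rminus_diag; unfold Rdiv; rewrite Rmult_0_r, Rmult_0_l.
    split; [apply Hx0 | split; lra].
  - destruct (budget_of_invariant _ k HDk Hdrift) as [Hbudget HD].
    destruct (step_from_local k Xk Hbudget HD) as [Xk1 [Hcontr Hstep]].
    pose proof (le_sqrt_mul_of_sq _ _ _ (Edist_nonneg _ HS _) (Edist_nonneg _ HS _) Hcontr).
    pose proof (Enorm_triangle (x (S k)) (x k) (x 0%nat)).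
    rewrite <- tech_pow_Rmult; split; [exact Xk1|]; split.
    { assert (rate * dist (x k) <= rate * (rate ^ k * D0)) by (apply Rmult_le_compat_l; lra).
      lra. }
    replace (4 / 3 * D0 * (1 - rate * rate ^ k) / (1 - rate))
      with (4 / 3 * D0 * (1 - rate ^ k) / (1 - rate) + 4 / 3 * (rate ^ k * D0)) by (field; lra).
    lra.
Qed.

Lemma iterate_within_budget k :
  Enorm (vsub (x k) (x 0%nat)) <= 4 / 3 * D0 / (1 - rate) /\ dist (x k) <= D0.
Proof.
  destruct (iterates_invariant k) as [_ [HDk Hdrift]]; exact (budget_of_invariant _ k HDk Hdrift).
Qed.

Lemma iterate_step k :
  X (x (S k)) /\ dist (x (S k)) ^ 2 <= (1 - (mu / L) ^ 2 / 2) * dist (x k) ^ 2 /\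
  Enorm (vsub (x (S k)) (x k)) <= 4 / 3 * dist (x k).
Proof.
  destruct (iterate_within_budget k) as [Hdrift HD].
  exact (step_from_local k (proj1 (iterates_invariant k)) Hdrift HD).
Qed.

Lemma iterates_in_ball k : Eball xbar eps (x k).
Proof.
  destruct (iterate_within_budget k) as [Hdrift HD].
  destruct (near_start_is_local _ Hdrift HD) as [Hr _].
  pose proof (Edist_nonneg _ HS (x k)); unfold Eball; lra.
Qed.

(* Along the iterates the gap f - f* is at most 4/3 L rate^k D0, so a limit point is a minimizer. *)
Lemma limit_is_minimizer p : vconverges x p -> argmin_on X f p.
Proof.
  intro Hp; destruct rate_range as [Hq0 Hq1]; pose proof (Edist_nonneg _ HS (x 0%nat)).
  assert (Xp : X p).
  { apply (lr_closed LR); intros e He; destruct (Hp e He) as [N HN]; exists (x N).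
    split; [apply iterates_invariant | rewrite Enorm_sym; apply HN; lia]. }
  assert (Hgap : forall k, f (x k) - f xbar <= 4 / 3 * L * D0 * rate ^ k).
  { intro k; destruct (iterates_invariant k) as [Xk [HDk _]].
    destruct (iterate_within_budget k) as [Hdrift HD].
    destruct (near_start_is_local _ Hdrift HD) as [Hr Hrho].
    destruct (Hrun k) as [Hz _]; pose proof (Edist_nonneg _ HS (x k)).
    destruct (gap_sandwich LR _ _ Xk Hr Hrho Hz) as [_ Hup]; rewrite (fstar_value LR) in Hup.
    pose proof (subgrad_le_L _ _ Xk ltac:(unfold Eball; lra) Hz); nra. }
  assert (Hfp : f p <= f xbar).
  { apply (continuous_limit_le f x p _ (lr_continuous LR) Hp); intros e He.
    destruct (pow_lt_1_zero rate ltac:(rewrite Rabs_right; lra) (e / (4 / 3 * L * D0 + 1)))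
      as [N HN]; [apply Rdiv_lt_0_compat; nra|].
    exists N; intros k Hk; specialize (HN k Hk); specialize (Hgap k).
    rewrite Rabs_right in HN by (apply Rle_ge, pow_le; lra).
    apply (Rmult_lt_compat_l (4 / 3 * L * D0 + 1)) in HN; [|nra].
    replace ((4 / 3 * L * D0 + 1) * (e / (4 / 3 * L * D0 + 1))) with e in HN by (field; nra).
    pose proof (pow_le rate k Hq0); nra. }
  split; [exact Xp|]; intros z Xz; pose proof (proj2 (lr_minimizer LR) z Xz); lra.
Qed.

Lemma rate_constant : 4 / 3 * D0 / (1 - rate) <= 16 * L ^ 3 * D0 / (3 * mu ^ 3).
Proof.
  destruct rate_range as [Hq0 Hq1]; pose proof (Edist_nonneg _ HS (x 0%nat)); pose proof (lr_mu LR).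
  destruct (Req_dec D0 0) as [E|E]; [rewrite E; right; field; lra|].
  assert (Htau : 0 < mu / L <= 4 / 3) by (split; [apply Rdiv_lt_0_compat|apply tau_le_4_3]; lra).
  destruct (contraction_rate_bounds _ Htau) as [_ Hq].
  apply (Rmult_le_reg_r (1 - rate)); [lra|].
  replace (4 / 3 * D0 / (1 - rate) * (1 - rate))
    with (16 * L ^ 3 * D0 / (3 * mu ^ 3) * ((mu / L) ^ 3 / 4)) by (field; lra).
  apply Rmult_le_compat_l; [|lra].
  apply Rmult_le_pos; [pose proof (pow_lt L 3 HLpos); nra|].
  apply Rlt_le, Rinv_0_lt_compat; pose proof (pow_lt mu 3 (lr_mu LR)); lra.
Qed.

Lemma iterates_converge :
  exists xinf, argmin_on X f xinf /\ vconverges x xinf /\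
    forall k, Enorm (vsub (x k) xinf)
              <= 16 * L ^ 3 * D0 / (3 * mu ^ 3) * sqrt ((1 - (mu / L) ^ 2 / 2) ^ k).
Proof.
  destruct rate_range as [Hq0 Hq1]; pose proof (Edist_nonneg _ HS (x 0%nat)).
  assert (Hsteps : forall j, Enorm (vsub (x (S j)) (x j)) <= 4 / 3 * D0 * rate ^ j).
  { intro j; destruct (iterate_step j) as [_ [_ Hstep]].
    destruct (iterates_invariant j) as [_ [HDj _]]; lra. }
  destruct (geometric_steps_converge x _ _ (conj Hq0 Hq1) Hsteps) as [xinf [Hconv Hrate]].
  exists xinf; split; [apply limit_is_minimizer, Hconv|]; split; [exact Hconv|].
  intro k; eapply Rle_trans; [apply Hrate|].
  destruct (Req_dec D0 0) as [E|E]; [rewrite E; unfold Rdiv; rewrite !Rmult_0_r, !Rmult_0_l; lra|].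
  assert (Htau : 0 < mu / L <= 4 / 3)
    by (split; [apply Rdiv_lt_0_compat; [exact (lr_mu LR) | exact HLpos] | apply tau_le_4_3; lra]).
  rewrite sqrt_pow_comm by nra.
  replace (4 / 3 * D0 * rate ^ k / (1 - rate)) with (4 / 3 * D0 / (1 - rate) * rate ^ k)
    by (field; lra).
  apply Rmult_le_compat_r; [apply pow_le, Hq0 | apply rate_constant].
Qed.

End PolyakRun.

Theorem theorem5p5 (n : nat) (X : vec n -> Prop) (f : vec n -> R)
  (xbar : vec n) (eps mu rho L : R)
  (* Local Regularity Assumption *)
  (HXne : exists x, X x) (HXcl : Eclosed_set X) (HXcv : Econvex_set X)
  (Hfc : Econtinuous_fun f)
  (Hxbar : argmin_on X f xbar)
  (Heps : 0 < eps) (Hmu : 0 < mu) (Hrho : 0 < rho)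
  (Hwc : forall x y zeta, X x -> Eball xbar eps x -> X y -> Eball xbar eps y ->
           frechet_subgrad f x zeta ->
           f y >= f x + Einner zeta (vsub y x) - rho / 2 * (Enorm (vsub y x))^2)
  (Hsharp : forall x, X x -> Eball xbar eps x ->
           f x - inf_on X f >= mu * Edist x (argmin_on X f))
  (* L = sup of subgradient norms on X ∩ B_eps(xbar), finite and positive *)
  (HL : is_lub (fun r => exists x zeta, X x /\ Eball xbar eps x /\
                   frechet_subgrad f x zeta /\ r = Enorm zeta) L)
  (HLpos : 0 < L)
  (* the Polyak iterates *)
  (x zeta : nat -> vec n)
  (Hrun : polyak_run X f x zeta)
  (Hx0 : X (x 0%nat) /\ Eball xbar (eps / 4) (x 0%nat))
  (Hd0 : Edist (x 0%nat) (argmin_on X f)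
         <= Rmin (3 * eps * mu ^ 2 / (64 * L ^ 2)) (mu / (2 * rho))) :
  let tau := mu / L in
  (forall k, Eball xbar eps (x k)) /\
  (forall k, (Edist (x (S k)) (argmin_on X f)) ^ 2
             <= (1 - tau ^ 2 / 2) * (Edist (x k) (argmin_on X f)) ^ 2) /\
  (exists xinf, argmin_on X f xinf /\
     (forall e, 0 < e -> exists N, forall k, (N <= k)%nat -> Enorm (vsub (x k) xinf) < e) /\
     (forall k, Enorm (vsub (x k) xinf)
                <= 16 * L ^ 3 * Edist (x 0%nat) (argmin_on X f) / (3 * mu ^ 3)
                   * sqrt ((1 - tau ^ 2 / 2) ^ k))).
Proof.
  intro tau.
  assert (LR : local_regularity X f xbar eps mu rho) by (constructor; assumption).
  split; [|split].
  - exact (iterates_in_ball LR HL HLpos Hrun Hx0 Hd0).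
  - intro k; exact (proj1 (proj2 (iterate_step LR HL HLpos Hrun Hx0 Hd0 k))).
  - exact (iterates_converge LR HL HLpos Hrun Hx0 Hd0).
Qed.
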